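(* Let $q=2^m\geq 4$ with $m$ a positive integer, let $b\in\mathbb{F}_q^*$ and $\delta\in\mathbb{F}_{q^2}\setminus\mathbb{F}_q$. Put $$B=b^4\delta^{q+1}\mathrm{Tr}_{q^2/q}(\delta),\quad C=b^4\mathrm{Tr}_{q^2/q}(\delta),\quad D=b^4\mathrm{Tr}_{q^2/q}(\delta)^2,$$ and define $S_{-1}=0$, $S_0=1$, $S_i=C^{2^{i-1}}S_{i-1}+D^{2^{i-1}}S_{i-2}$ for $i\geq1$. If the polynomial $$P(x)=b(x^q+x+\delta)^{q(2q+1)/4}+x$$ permutes $\mathbb{F}_{q^2}$, then its compositional inverse over $\mathbb{F}_{q^2}$ is $$P^{-1}(x)=x+b\left(\delta+\sum_{i=0}^{m-1}\left(S_{m-2-i}^{2^{i+1}}+D^{1-2^{i+1}}S_i\right)\left(x^{4q}+x^4+B\right)^{2^i}\right)^{q(2q+1)/4}.$$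
   Context: $\mathrm{Tr}_{q^2/q}(y)=y+y^q$. The compositional inverse of a permutation polynomial $f$ of $\mathbb{F}_{Q}$ is the unique polynomial $f^{-1}$ (modulo $x^Q-x$) with $f(f^{-1}(c))=f^{-1}(f(c))=c$ for all $c\in\mathbb{F}_Q$. *)

From mathcomp Require Import all_boot all_order all_algebra all_field.
Set Implicit Arguments. Unset Strict Implicit. Unset Printing Implicit Defensive.
Import GRing.Theory.
Local Open Scope ring_scope.

Section Defs.
Variable F : finFieldType.

Definition Tr (q : nat) (y : F) : F := y + y ^+ q.

(* Shifted sequence: Sh n = S_{n-1}, so Sh 0 = S_{-1} = 0, Sh 1 = S_0 = 1,
   Sh (n+2) = S_{n+1} = C^(2^n) S_n + D^(2^n) S_{n-1}. *)
Fixpoint Sh (C D : F) (n : nat) : F :=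
  match n with
  | 0 => 0
  | 1 => 1
  | (k.+1 as n1).+1 => C ^+ (2 ^ k) * Sh C D n1 + D ^+ (2 ^ k) * Sh C D k
  end.

Definition Sseq (C D : F) (i : nat) : F := Sh C D i.+1.

Definition expo (q : nat) : nat := (q * (2 * q + 1)) %/ 4.

Definition Ppoly (q : nat) (b delta : F) (x : F) : F :=
  b * (x ^+ q + x + delta) ^+ expo q + x.

Definition Bc (q : nat) (b delta : F) : F := b ^+ 4 * delta ^+ q.+1 * Tr q delta.
Definition Cc (q : nat) (b delta : F) : F := b ^+ 4 * Tr q delta.
Definition Dc (q : nat) (b delta : F) : F := b ^+ 4 * (Tr q delta) ^+ 2.

(* D^(1 - 2^(i+1)) written as D * (D^(2^(i+1)))^-1 (D is nonzero). *)
Definition Pinv (m : nat) (b delta : F) (x : F) : F :=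
  let q := (2 ^ m)%N in
  let B := Bc q b delta in
  let C := Cc q b delta in
  let D := Dc q b delta in
  x + b * (delta + \sum_(i < m)
        ((Sh C D (m.-1 - i)) ^+ (2 ^ i.+1) + D * (D ^+ (2 ^ i.+1))^-1 * Sseq C D i)
          * (x ^+ (4 * q) + x ^+ 4 + B) ^+ (2 ^ i)) ^+ expo q.

End Defs.

(* Write q = 2^m, Tr y = y + y^q and L(z) = z^4 + C z^2 + D z.  In
   characteristic 2 one computes Tr(P x)^4 = L(Tr x) + B, so Tr \o P factors
   through Tr, which maps F_{q^2} onto F_q; since P is onto, the induced map on
   F_q is injective, hence L has no nonzero root in F_q and the cubic
   X^3 + C X + D has no root in F_{q^2}.  For a root t of this cubic in an
   extension, the q-Frobenius orbit of t is {t, t^q, t^q + t}, while iterating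
   t^4 = C t^2 + D t gives t^q = S_{m-1} t^2 + D S_{m-2}^2 t; comparing the two
   expressions of t^(q^2) yields S_m + D S_{m-2}^2 = 1.  Finally the
   coefficients a_i of P^-1 satisfy a three-term recurrence making
   sum_i a_i L(z)^(2^i) telescope to (S_m + D S_{m-2}^2) z = z on F_q; with
   z = Tr x and L(Tr x) = Tr(P x)^4 + B this inverts P. *)

From mathcomp Require Import all_boot all_order all_algebra all_field.
From mathcomp Require Import ring zify.
Set Implicit Arguments.
Unset Strict Implicit.
Unset Printing Implicit Defensive.
Import GRing.Theory.
Local Open Scope ring_scope.

Lemma semiconj_bij_inj (T U : finType) (f : T -> T) (pi : T -> U) (g : U -> U) :
  bijective f -> (forall x, pi (f x) = g (pi x)) ->
  forall x y, g (pi x) = g (pi y) -> pi x = pi y.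
Proof.
move=> [f' fK f'K] pi_f x y; set A := pi @: [set: T].
have sub : A \subset g @: A.
  by apply/subsetP => _ /imsetP[z _ ->]; rewrite -[z]f'K pi_f !imset_f ?inE.
have /imset_injP g_inj : #|g @: A| == #|A|.
  by rewrite eqn_leq leq_imset_card subset_leq_card.
by apply: g_inj; rewrite imset_f ?inE.
Qed.

Section Char2.
Variable R : comNzRingType.
Hypothesis R2 : 2 \in [pchar R].

(* Lets [ring] prove identities that only hold in characteristic 2. *)
Lemma eq_add_mul2 (a b k : R) : a = b + 2%:R * k -> a = b.
Proof. by rewrite (pcharf0 R2) mul0r addr0. Qed.

Lemma exprD_pchar2X k (x y : R) : (x + y) ^+ (2 ^ k) = x ^+ (2 ^ k) + y ^+ (2 ^ k).
Proof. by apply: exprDn_pchar; rewrite (eq_pnat _ (pcharf_eq R2)) pnatX pnat_id. Qed.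

Lemma expr4D_pchar2 (x y : R) : (x + y) ^+ 4 = x ^+ 4 + y ^+ 4.
Proof. exact: (exprD_pchar2X 2). Qed.

Lemma addr_eq0_pchar2 (x y : R) : (x + y == 0) = (x == y).
Proof. by rewrite addr_eq0 oppr_pchar2. Qed.

Lemma expr2XS k (x : R) : x ^+ (2 ^ k.+1) = (x ^+ (2 ^ k)) ^+ 2.
Proof. by rewrite -exprM expnSr. Qed.

Definition lin4 (C D z : R) := z ^+ 4 + C * z ^+ 2 + D * z.

Lemma lin4D C D : {morph lin4 C D : y z / y + z}.
Proof.
move=> y z; rewrite /lin4 -[4%N]/(2 ^ 2)%N !exprD_pchar2X.
by apply: (@eq_add_mul2 _ _ (C * y * z)); ring.
Qed.

Lemma lin4_expr2X C D z i :
  lin4 C D z ^+ (2 ^ i) =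
  z ^+ (2 ^ i.+2) + C ^+ (2 ^ i) * z ^+ (2 ^ i.+1) + D ^+ (2 ^ i) * z ^+ (2 ^ i).
Proof.
rewrite /lin4 !exprD_pchar2X (exprMn _ C) (exprMn _ D) -!exprM.
by rewrite -[4%N]/(2 ^ 2)%N -expnD -expnS add2n.
Qed.

Lemma expr2X_lin4_root (s : nat -> R) C D t :
  s 0%N = 0 -> s 1%N = 1 ->
  (forall n, s n.+2 = C * s n.+1 ^+ 2 + D ^+ 2 * s n ^+ 4) ->
  lin4 C D t = 0 ->
  forall n, t ^+ (2 ^ n.+1) = s n.+1 * t ^+ 2 + D * s n ^+ 2 * t.
Proof.
move=> s0 s1 s_rec /eqP; rewrite /lin4 -addrA addr_eq0_pchar2 => /eqP t4.
elim=> [|n IHn]; first by rewrite s0 s1; ring.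
rewrite expr2XS IHn (exprD_pchar2X 1) s_rec.
transitivity (s n.+1 ^+ 2 * t ^+ 4 + D ^+ 2 * s n ^+ 4 * t ^+ 2); first by ring.
by rewrite t4; ring.
Qed.

(* The hypothesis kills the coefficient of z ^+ (2 ^ j.+2) for every j < n. *)
Lemma sum_lin4_expr2X (a : nat -> R) C D z n :
  (forall j, (j < n)%N ->
     a j + a j.+1 * C ^+ (2 ^ j.+1) + a j.+2 * D ^+ (2 ^ j.+2) = 0) ->
  \sum_(i < n.+2) a i * lin4 C D z ^+ (2 ^ i) =
  a 0%N * D * z + (a 0%N * C + a 1%N * D ^+ 2) * z ^+ 2
  + (a n + a n.+1 * C ^+ (2 ^ n.+1)) * z ^+ (2 ^ n.+2) + a n.+1 * z ^+ (2 ^ n.+3).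
Proof.
elim: n => [|n IHn] a_rec.
  by rewrite !big_ord_recr big_ord0 /= !lin4_expr2X; ring.
rewrite big_ord_recr /= IHn => [|j ltjn]; last exact/a_rec/ltnW.
have a_n : a n = - (a n.+1 * C ^+ (2 ^ n.+1) + a n.+2 * D ^+ (2 ^ n.+2)).
  by apply/eqP; rewrite -addr_eq0 addrA a_rec.
by rewrite lin4_expr2X a_n; ring.
Qed.

Lemma lin4_root_frobenius_relation k C D a b t :
  lin4 C D t = 0 -> t ^+ (2 ^ k) = a * t ^+ 2 + b * t ->
  a ^+ (2 ^ k) = a -> b ^+ (2 ^ k) = b -> (t ^+ (2 ^ k)) ^+ (2 ^ k) = t ^+ (2 ^ k) + t ->
  a * (a ^+ 2 * C + b ^+ 2 + b + 1) * t ^+ 2 + (a ^+ 3 * D + b ^+ 2 + b + 1) * t = 0.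
Proof.
move=> /eqP; rewrite /lin4 -addrA addr_eq0_pchar2 => /eqP t4 tq aq bq.
rewrite tq exprD_pchar2X (exprMn _ a) (exprMn _ b) aq bq exprAC tq; set u := a * t ^+ 2 + b * t.
move=> u_rel; have u2 : u ^+ 2 = a ^+ 2 * (C * t ^+ 2 + D * t) + b ^+ 2 * t ^+ 2.
  by rewrite (exprD_pchar2X 1) (exprMn _ a) (exprMn _ b) -t4 -exprM.
transitivity (a * u ^+ 2 + b * u + (u + t)); first by rewrite u2 /u; ring.
by rewrite u_rel addrr_pchar2.
Qed.

End Char2.

Lemma card_pchar2 (F : finFieldType) m : #|F| = (2 ^ m * 2 ^ m)%N -> 2 \in [pchar F].
Proof. by rewrite -expnD => /card_finPcharP; apply. Qed.

Lemma expr_card_fixed_image (F : finFieldType) (E : fieldType)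
    (iota : {rmorphism F -> E}) (y : E) :
  y ^+ #|F| = y -> exists a, y = iota a.
Proof.
move=> yF; have : (map_poly iota ('X^#|F| - 'X)).[y] = 0.
  by rewrite rmorphB /= map_polyXn map_polyX !hornerE yF subrr.
rewrite finField_genPoly rmorph_prod horner_prod => /eqP /prodf_eq0 [a _].
by rewrite /= map_polyXsubC hornerXsubC subr_eq0 => /eqP ->; exists a.
Qed.

Lemma rmorph_lin_indep (F E : fieldType) (iota : {rmorphism F -> E}) t x y :
  (forall a, t != iota a) -> iota x * t + iota y = 0 -> x = 0 /\ y = 0.
Proof.
move=> t_notin; have [-> | x0] := eqVneq x 0.
  by rewrite rmorph0 mul0r add0r => /eqP; rewrite fmorph_eq0 => /eqP.
move=> /eqP; rewrite addr_eq0 => /eqP xt; case/negP: (t_notin (- y / x)).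
by rewrite fmorph_div rmorphN -xt mulrC mulKf ?fmorph_eq0.
Qed.

Section CubicFrobenius.
Variables (E : fieldType) (k : nat).
Hypothesis E2 : 2 \in [pchar E].
Local Notation q := (2 ^ k)%N.

Lemma expr2X_inj : injective (fun x : E => x ^+ q).
Proof.
move=> x y /= /eqP; rewrite -addr_eq0_pchar2 // -exprD_pchar2X //.
by rewrite expf_eq0 addr_eq0_pchar2 // => /andP[_ /eqP].
Qed.

Lemma cubic_frobenius_orbit (c d t : E) :
  c ^+ q = c -> d ^+ q = d -> t ^+ 3 + c * t + d = 0 -> (t ^+ q) ^+ q != t ->
  (t ^+ q) ^+ q = t ^+ q + t.
Proof.
move=> cq dq t_root tq2.
have root_exp y : y ^+ 3 + c * y + d = 0 -> (y ^+ q) ^+ 3 + c * y ^+ q + d = 0.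
  move=> y_root; rewrite -cq -dq -exprMn exprAC -!exprD_pchar2X //.
  by rewrite y_root expr0n expn_eq0.
have other_root y : y ^+ 3 + c * y + d = 0 -> y != t -> y ^+ 2 + y * t + t ^+ 2 + c = 0.
  move=> y_root yt; apply/eqP.
  have : (y - t) * (y ^+ 2 + y * t + t ^+ 2 + c) == 0.
    rewrite (_ : _ * _ = (y ^+ 3 + c * y + d) - (t ^+ 3 + c * t + d)); last by ring.
    by rewrite y_root t_root subrr.
  by rewrite mulf_eq0 subr_eq0 (negbTE yt).
set v := t ^+ q; set w := v ^+ q.
have vt : v != t by apply: contraNneq tq2; rewrite /w /v => vt; rewrite !vt.
have wv : w != v by apply: contraNneq vt => /(@expr2X_inj v t) ->.
have v_root := root_exp t t_root; have w_root := root_exp v v_root.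
have : (w - v) * (w + v + t) == 0.
  rewrite (_ : _ * _ = (w ^+ 2 + w * t + t ^+ 2 + c) - (v ^+ 2 + v * t + t ^+ 2 + c)); last by ring.
  by rewrite other_root // other_root // subrr.
by rewrite mulf_eq0 subr_eq0 (negbTE wv) -addrA addr_eq0_pchar2 // => /eqP.
Qed.

End CubicFrobenius.

Lemma frobenius_coefs_eq1 (F : fieldType) (C D x y : F) : 2 \in [pchar F] ->
  x * (x ^+ 2 * C + y ^+ 2 + y + 1) = 0 -> x ^+ 3 * D + y ^+ 2 + y + 1 = 0 ->
  C * x ^+ 2 + y ^+ 2 + y = 1.
Proof.
move=> F2; have [-> _ | x0] := eqVneq x 0.
  by rewrite !expr0n /= mul0r mulr0 !add0r => /eqP; rewrite addr_eq0_pchar2 // => /eqP.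
move=> /eqP; rewrite mulf_eq0 (negbTE x0) /= addr_eq0_pchar2 // => /eqP <- _; ring.
Qed.

Section Sh.
Variable F : finFieldType.
Hypothesis F2 : 2 \in [pchar F].
Variables C D : F.

Lemma ShSS k : Sh C D k.+2 = C ^+ (2 ^ k) * Sh C D k.+1 + D ^+ (2 ^ k) * Sh C D k.
Proof. by []. Qed.

Lemma ShSS_expr2X k i : Sh C D k.+2 ^+ (2 ^ i) =
  C ^+ (2 ^ (k + i)) * Sh C D k.+1 ^+ (2 ^ i) + D ^+ (2 ^ (k + i)) * Sh C D k ^+ (2 ^ i).
Proof. by rewrite ShSS (exprD_pchar2X F2) !exprMn -!exprM -!expnD. Qed.

Lemma Sh_rev n : Sh C D n.+2 = C * Sh C D n.+1 ^+ 2 + D ^+ 2 * Sh C D n ^+ 4.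
Proof.
suff [] : Sh C D n.+2 = C * Sh C D n.+1 ^+ 2 + D ^+ 2 * Sh C D n ^+ 4 /\
          Sh C D n.+3 = C * Sh C D n.+2 ^+ 2 + D ^+ 2 * Sh C D n.+1 ^+ 4 by [].
elim: n => [|n [IH1 IH2]]; first by rewrite !ShSS /= !expr1 !expr0n /=; split; ring.
split=> //; rewrite (ShSS_expr2X n.+1 1) (ShSS_expr2X n 2) ShSS IH2 !addn1 !addn2.
by move: (Sh C D n.+2) IH1 => s2 ->; ring.
Qed.

Lemma Sh_fixed k : C ^+ (2 ^ k) = C -> D ^+ (2 ^ k) = D ->
  forall n, Sh C D n ^+ (2 ^ k) = Sh C D n.
Proof.
move=> Ck Dk n.
suff [] : Sh C D n ^+ (2 ^ k) = Sh C D n /\ Sh C D n.+1 ^+ (2 ^ k) = Sh C D n.+1 by [].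
elim: n => [|n [IH1 IH2]]; first by rewrite expr0n expr1n expn_eq0.
by split=> //; rewrite ShSS_expr2X IH1 IH2 expnD mulnC !exprM Ck Dk.
Qed.

Lemma Sh_rev_expr2X n k :
  Sh C D n.+2 ^+ (2 ^ k) + Sh C D n.+1 ^+ (2 ^ k.+1) * C ^+ (2 ^ k)
  + Sh C D n ^+ (2 ^ k.+2) * D ^+ (2 ^ k.+1) = 0.
Proof.
have e2 x : (x ^+ 2) ^+ (2 ^ k) = x ^+ (2 ^ k.+1) by rewrite -exprM -expnS.
have e4 x : (x ^+ 4) ^+ (2 ^ k) = x ^+ (2 ^ k.+2).
  by rewrite -exprM -[4%N]/(2 ^ 2)%N -expnD add2n.
apply/eqP; rewrite -addrA addr_eq0_pchar2 // Sh_rev (exprD_pchar2X F2).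
by rewrite (exprMn _ C) (exprMn _ (D ^+ 2)) !e2 !e4 mulrC [X in _ + X]mulrC.
Qed.

Lemma Sh_scaled_rec j : D != 0 ->
  D * (D ^+ (2 ^ j.+1))^-1 * Sh C D j.+1
  + D * (D ^+ (2 ^ j.+2))^-1 * Sh C D j.+2 * C ^+ (2 ^ j.+1)
  + D * (D ^+ (2 ^ j.+3))^-1 * Sh C D j.+3 * D ^+ (2 ^ j.+2) = 0.
Proof.
move=> D0; rewrite (ShSS j.+1) !(expr2XS j.+1) (expr2XS j.+2) !(expr2XS j.+1).
set d := D ^+ (2 ^ j.+1); have d0 : d != 0 by rewrite expf_neq0.
set c := C ^+ (2 ^ j.+1).
apply: (@eq_add_mul2 _ F2 _ _ (D / d * Sh C D j.+1 + D / d ^+ 2 * c * Sh C D j.+2)).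
by field; rewrite ?expf_neq0.
Qed.

Definition Pinv_coef m i :=
  Sh C D (m.-1 - i) ^+ (2 ^ i.+1) + D * (D ^+ (2 ^ i.+1))^-1 * Sseq C D i.

Lemma Pinv_coef_rec m j : D != 0 -> (j.+3 <= m)%N ->
  Pinv_coef m j + Pinv_coef m j.+1 * C ^+ (2 ^ j.+1) + Pinv_coef m j.+2 * D ^+ (2 ^ j.+2) = 0.
Proof.
move=> D0 ltjm; have [n ->] : exists n, m = (n + j.+3)%N by exists (m - j.+3)%N; rewrite subnK.
rewrite /Pinv_coef /Sseq (_ : (n + j.+3).-1 - j = n.+2)%N; last by lia.
rewrite (_ : (n + j.+3).-1 - j.+1 = n.+1)%N; last by lia.
rewrite (_ : (n + j.+3).-1 - j.+2 = n)%N; last by lia.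
have := Sh_rev_expr2X n j.+1; have := Sh_scaled_rec j D0.
by move=> fwd rev; rewrite -(addr0 0) -{1}fwd -rev; ring.
Qed.

Lemma sum_Pinv_coef_lin4 m z : (2 <= m)%N -> D != 0 -> D ^+ (2 ^ m) = D ->
  z ^+ (2 ^ m) = z ->
  \sum_(i < m) Pinv_coef m i * lin4 C D z ^+ (2 ^ i) = (Sh C D m.+1 + D * Sh C D m.-1 ^+ 2) * z.
Proof.
case: m => [|[|n]] // _ D0 Dq zq.
rewrite (sum_lin4_expr2X F2) => [|j ltjn]; last exact: Pinv_coef_rec.
rewrite (expr2XS n.+2 z) zq /Pinv_coef /Sseq subn0 !succnK.
rewrite (_ : (n.+1 - 1 = n)%N); last by lia.
rewrite (_ : (n.+1 - n = 1)%N); last by lia.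
have Sh0 : Sh C D 0 = 0 by [].
have Sh1 : Sh C D 1 = 1 by [].
have Sh2 : Sh C D 2 = C by rewrite ShSS expn0 !expr1 Sh1 Sh0 mulr1 mulr0 addr0.
have zero_exp : (0 : F) ^+ (2 ^ n.+2) = 0 by rewrite expr0n expn_eq0.
rewrite subnn Dq Sh2 (ShSS n.+1) Sh_rev Sh1 Sh0 expr1n zero_exp.
have r2 : (D ^+ (2 ^ n.+1)) ^+ 2 = D by rewrite -expr2XS.
have r0 : D ^+ (2 ^ n.+1) != 0 by rewrite expf_neq0.
move: (C ^+ (2 ^ n.+1)) (Sh C D n.+1) (Sh C D n) => c s1 s0.
move: (D ^+ (2 ^ n.+1)) r2 r0 => r <- r0.
apply: (@eq_add_mul2 _ F2 _ _ (z + (C * s1 ^+ 2 + C / r ^+ 2 + r ^+ 4 * s0 ^+ 4) * z ^+ 2)).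
by field; rewrite ?expf_neq0.
Qed.

End Sh.

Lemma Sh_eq1_of_root_notin (F : finFieldType) (E : fieldType) (iota : {rmorphism F -> E})
    m (C D : F) (t : E) :
  (0 < m)%N -> #|F| = (2 ^ m * 2 ^ m)%N -> C ^+ (2 ^ m) = C -> D ^+ (2 ^ m) = D ->
  t ^+ 3 + iota C * t + iota D = 0 -> (forall a, t != iota a) ->
  Sh C D m.+1 + D * Sh C D m.-1 ^+ 2 = 1.
Proof.
move=> m0 cardF Cq Dq t_cubic t_notin; have F2 := card_pchar2 cardF.
have E2 : 2 \in [pchar E] by rewrite (fmorph_pchar iota).
have iota_fixed (x : F) : x ^+ (2 ^ m) = x -> iota x ^+ (2 ^ m) = iota x.
  by rewrite -rmorphXn => ->.
have t_orbit : (t ^+ (2 ^ m)) ^+ (2 ^ m) = t ^+ (2 ^ m) + t.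
  apply: (cubic_frobenius_orbit E2 (iota_fixed _ Cq) (iota_fixed _ Dq) t_cubic).
  apply/eqP => tq2; have [a t_a] : exists a, t = iota a.
    by apply: expr_card_fixed_image; rewrite cardF exprM.
  by case/eqP: (t_notin a).
have t_lin4 : lin4 (iota C) (iota D) t = 0.
  rewrite /lin4 (_ : _ + _ = t * (t ^+ 3 + iota C * t + iota D)); last by ring.
  by rewrite t_cubic mulr0.
have t_q : t ^+ (2 ^ m) = iota (Sh C D m) * t ^+ 2 + iota (D * Sh C D m.-1 ^+ 2) * t.
  have s_rec n : iota (Sh C D n.+2) =
      iota C * iota (Sh C D n.+1) ^+ 2 + iota D ^+ 2 * iota (Sh C D n) ^+ 4.
    by rewrite (Sh_rev F2) rmorphD (rmorphM _ C) (rmorphM _ (D ^+ 2)) !rmorphXn.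
  have := expr2X_lin4_root E2 (s := fun n => iota (Sh C D n)) (rmorph0 _) (rmorph1 _)
    s_rec t_lin4 m.-1.
  by rewrite prednK // rmorphM rmorphXn mulrA.
have Shm_fixed : Sh C D m ^+ (2 ^ m) = Sh C D m by apply: Sh_fixed.
have DShm_fixed : (D * Sh C D m.-1 ^+ 2) ^+ (2 ^ m) = D * Sh C D m.-1 ^+ 2.
  by rewrite exprMn Dq exprAC Sh_fixed.
have := lin4_root_frobenius_relation E2 t_lin4 t_q (iota_fixed _ Shm_fixed)
  (iota_fixed _ DShm_fixed) t_orbit.
rewrite -[in Sh C D m.+1](prednK m0) (Sh_rev F2) prednK //.
rewrite (_ : D ^+ 2 * _ = (D * Sh C D m.-1 ^+ 2) ^+ 2); last by ring.
move: (Sh C D m) (D * Sh C D m.-1 ^+ 2) => x y rel.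
have t0 : t != 0 by have := t_notin 0; rewrite rmorph0.
have [x_rel y_rel] : x * (x ^+ 2 * C + y ^+ 2 + y + 1) = 0 /\ x ^+ 3 * D + y ^+ 2 + y + 1 = 0.
  apply: (rmorph_lin_indep t_notin); apply: (mulIf t0).
  by rewrite mul0r -[RHS]rel !rmorphD !rmorphM rmorph1; ring.
exact: frobenius_coefs_eq1 F2 x_rel y_rel.
Qed.

Lemma Sh_eq1_of_cubic_no_root (F : finFieldType) m (C D : F) :
  (0 < m)%N -> #|F| = (2 ^ m * 2 ^ m)%N -> C ^+ (2 ^ m) = C -> D ^+ (2 ^ m) = D ->
  (forall y, y ^+ 3 + C * y + D != 0) ->
  Sh C D m.+1 + D * Sh C D m.-1 ^+ 2 = 1.
Proof.
move=> m0 cardF Cq Dq no_root; pose p : {poly F} := 'X^3 + C *: 'X + D%:P.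
have p_gt1 : (1 < size p)%N.
  rewrite /p -addrA size_polyDl ?size_polyXn // (leq_ltn_trans (size_polyD _ _)) //.
  rewrite gtn_max (leq_ltn_trans (size_scale_leq _ _)) ?size_polyX //.
  by rewrite (leq_ltn_trans (size_polyC_leq1 _)).
have [E [iota [t p_t _]]] := countable_field_extension p_gt1.
have t_cubic : t ^+ 3 + iota C * t + iota D = 0.
  move: p_t; rewrite /root /p !rmorphD /= map_polyXn map_polyZ map_polyX map_polyC /=.
  by rewrite !hornerE => /eqP.
apply: (Sh_eq1_of_root_notin m0 cardF Cq Dq t_cubic) => a.
apply/eqP => t_a; case/eqP: (no_root a); apply: (fmorph_inj iota).
by rewrite !rmorphD rmorphXn rmorphM -t_a t_cubic rmorph0.
Qed.

Section Permutation.
Variables (F : finFieldType) (m : nat) (b delta : F).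
Hypotheses (m2 : (2 <= m)%N) (cardF : #|F| = (2 ^ m * 2 ^ m)%N).
Hypotheses (bq : b ^+ (2 ^ m) = b) (b0 : b != 0) (deltaq : delta ^+ (2 ^ m) != delta).
Local Notation q := (2 ^ m)%N.
Local Notation P := (Ppoly q b delta).
Local Notation B := (Bc q b delta).
Local Notation C := (Cc q b delta).
Local Notation D := (Dc q b delta).

Let F2 : 2 \in [pchar F] := card_pchar2 cardF.

Lemma exprqK (x : F) : (x ^+ q) ^+ q = x.
Proof. by rewrite -exprM -cardF expf_card. Qed.

Lemma Tr_fixed (y : F) : Tr q y ^+ q = Tr q y.
Proof. by rewrite /Tr (exprD_pchar2X F2) exprqK addrC. Qed.

Lemma Tr_delta_neq0 : Tr q delta != 0.
Proof. by rewrite /Tr addr_eq0_pchar2 // eq_sym. Qed.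

Lemma Tr_scale_delta (z : F) : z ^+ q = z -> Tr q (z * delta / Tr q delta) = z.
Proof.
move=> zq; have := Tr_delta_neq0; rewrite /Tr !exprMn exprVn zq -/(Tr q delta) Tr_fixed.
by move=> T0; rewrite -mulrDl -mulrDr -/(Tr q delta) mulfK.
Qed.

Lemma Cc_fixed : C ^+ q = C.
Proof. by rewrite /Cc exprMn exprAC bq Tr_fixed. Qed.

Lemma Dc_fixed : D ^+ q = D.
Proof. by rewrite /Dc exprMn exprAC bq exprAC Tr_fixed. Qed.

Lemma Dc_neq0 : D != 0.
Proof. by rewrite /Dc mulf_neq0 ?expf_neq0 ?Tr_delta_neq0. Qed.

Lemma expo_mul4 : (expo q * 4 = q * q * 2 + q)%N.
Proof.
have q4 : (4 %| q)%N by rewrite -[4%N]/(2 ^ 2)%N dvdn_exp2l.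
by rewrite /expo divnK ?dvdn_mulr //; nia.
Qed.

Lemma Tr_Ppoly_expr4 (x : F) : Tr q (P x) ^+ 4 = lin4 C D (Tr q x) + B.
Proof.
set z := Tr q x; set u := x ^+ q + x + delta; set U := u ^+ expo q.
have uE : u = z + delta by rewrite /u /z /Tr (addrC x).
have uq : u ^+ q = z + delta ^+ q by rewrite uE (exprD_pchar2X F2) Tr_fixed.
have U4 : U ^+ 4 = u ^+ 2 * u ^+ q.
  by rewrite -exprM expo_mul4 exprD !exprM exprqK.
have TrP : Tr q (P x) = b * (U + U ^+ q) + z.
  rewrite /Tr /Ppoly -/u -/U (exprD_pchar2X F2) exprMn bq /z /Tr; ring.
rewrite TrP (expr4D_pchar2 F2 (b * _)) (exprMn _ b) (expr4D_pchar2 F2 U) (exprAC U) U4.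
rewrite exprMn exprAC exprqK uq uE /lin4 /Bc /Cc /Dc (exprS delta) /Tr.
by apply: (eq_add_mul2 F2 (k := b ^+ 4 * z * (z + delta) * (z + delta ^+ q))); ring.
Qed.

Hypothesis Pbij : bijective P.

Lemma lin4_fixed_eq0 (z : F) : z ^+ q = z -> lin4 C D z = 0 -> z = 0.
Proof.
move=> zq z_root; pose lift (w : F) := w * delta / Tr q delta.
pose g (w : F) := Tr q (P (lift w)).
have fourth_inj := expr2X_inj F2 (k := 2).
have Tr_lift w : w ^+ q = w -> Tr q (lift w) = w by exact: Tr_scale_delta.
have semiconj x : Tr q (P x) = g (Tr q x).
  by apply: fourth_inj; rewrite /= !Tr_Ppoly_expr4 Tr_lift ?Tr_fixed.
have zero_fixed : (0 : F) ^+ q = 0 by rewrite expr0n expn_eq0.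
rewrite -(Tr_lift z zq) -[0](Tr_lift 0 zero_fixed).
apply: (semiconj_bij_inj Pbij semiconj); apply: fourth_inj.
by rewrite /g /= !Tr_Ppoly_expr4 !Tr_lift // z_root /lin4 !expr0n !mulr0 !addr0.
Qed.

Lemma cubic_no_root (y : F) : y ^+ 3 + C * y + D != 0.
Proof.
apply/eqP => y_root.
have y_lin4 : lin4 C D y = 0.
  rewrite /lin4 (_ : _ + _ = y * (y ^+ 3 + C * y + D)); last by ring.
  by rewrite y_root mulr0.
have yq_lin4 : lin4 C D (y ^+ q) = 0.
  have := congr1 (fun w => w ^+ q) y_lin4; rewrite /lin4 /= !(exprD_pchar2X F2).
  by rewrite (exprMn _ C) (exprMn _ D) Cc_fixed Dc_fixed (exprAC y 4) (exprAC y 2) expr0n expn_eq0.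
have Tr_y0 : Tr q y = 0.
  by apply: lin4_fixed_eq0; rewrite ?Tr_fixed // /Tr lin4D // y_lin4 yq_lin4 addr0.
have y0 : y = 0.
  apply: lin4_fixed_eq0 y_lin4; apply/eqP.
  by rewrite eq_sym -addr_eq0_pchar2 // -/(Tr q y) Tr_y0.
by move: y_root Dc_neq0; rewrite y0 expr0n mulr0 !add0r => ->; rewrite eqxx.
Qed.

Lemma Ppoly_K : cancel P (Pinv m b delta).
Proof.
move=> x; rewrite /Pinv /=; set c := P x.
have c_lin4 : c ^+ (4 * q) + c ^+ 4 + B = lin4 C D (Tr q x).
  rewrite mulnC exprM -(expr4D_pchar2 F2) (addrC (c ^+ q)) -/(Tr q c) Tr_Ppoly_expr4.
  by rewrite -addrA addrr_pchar2 // addr0.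
have Sh_eq1 := Sh_eq1_of_cubic_no_root (ltnW m2) cardF Cc_fixed Dc_fixed cubic_no_root.
have := sum_Pinv_coef_lin4 F2 C m2 Dc_neq0 Dc_fixed (Tr_fixed x).
rewrite /Pinv_coef Sh_eq1 mul1r => sum_eq; rewrite c_lin4 sum_eq /c /Ppoly /Tr.
rewrite (_ : delta + (x + x ^+ q) = x ^+ q + x + delta); last by rewrite addrC (addrC x).
by rewrite addrAC (addrr_pchar2 F2) add0r.
Qed.

End Permutation.

Theorem theorem3p11 (F : finFieldType) (m : nat) :
  (2 <= m)%N ->
  #|F| = (2 ^ m * 2 ^ m)%N ->
  forall b delta : F,
    b ^+ (2 ^ m) = b -> b != 0 ->
    delta ^+ (2 ^ m) != delta ->
    bijective (Ppoly (2 ^ m) b delta) ->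
    (forall c : F, Ppoly (2 ^ m) b delta (Pinv m b delta c) = c) /\
    (forall c : F, Pinv m b delta (Ppoly (2 ^ m) b delta c) = c).
Proof.
move=> m2 cardF b delta bq b0 deltaq Pbij.
have PK : cancel (Ppoly (2 ^ m) b delta) (Pinv m b delta).
  exact: Ppoly_K m2 cardF bq b0 deltaq Pbij.
by split; [apply/(bij_can_sym Pbij) | exact: PK].
Qed.
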